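(* Every strongly homogeneous separable metrizable zero-dimensional space is strongly discrete homogeneous. In particular, the Cantor set $\mathbb C$, the rationals $\mathbb Q$, the irrationals $\mathbb P$, $\mathbb C\times\mathbb Q$ and $\mathbb C\times\mathbb P$ are strongly discrete homogeneous.
   Context: A Hausdorff space is strongly homogeneous if all of its nonempty clopen subspaces are homeomorphic to each other. A subset $D$ of $X$ is discrete if each point of $X$ has a neighbourhood containing at most one point of $D$. A Hausdorff space $X$ is strongly discrete homogeneous (sDH) if for any two discrete subsets $A,B$ of $X$ and any bijection $f\colon A\to B$, $f$ extends to a homeomorphism of $X$ onto itself. *)

From HB Require Import structures.
From mathcomp Require Import all_boot all_order all_algebra.
From mathcomp Require Import all_classical all_reals all_analysis.
From mathcomp Require Import Rstruct Rstruct_topology.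
From Stdlib Require Import Reals.
Set Implicit Arguments. Unset Strict Implicit. Unset Printing Implicit Defensive.
Import Order.TTheory GRing.Theory Num.Theory.
Local Open Scope classical_set_scope.
Local Open Scope ring_scope.

Definition separable_space (T : topologicalType) : Prop :=
  exists D : set T, countable D /\ dense D.

Definition metrizable_space (T : topologicalType) : Prop :=
  exists d : T -> T -> Rdefinitions.R,
    (forall x y : T, d x y = 0 <-> x = y) /\
    (forall x y : T, d x y = d y x) /\
    (forall x y z : T, d x z <= d x y + d y z) /\
    (forall U : set T, open U <->
       (forall x, U x -> exists e : Rdefinitions.R, 0 < e /\
          (forall y, d x y < e -> U y))).

Definition zero_dim_space (T : topologicalType) : Prop :=
  forall (x : T) (U : set T), open U -> U x ->
    exists V : set T, clopen V /\ V x /\ V `<=` U.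

Definition homeomorphic_subspaces (T : topologicalType) (A B : set T) : Prop :=
  exists f g : T -> T,
    (forall x, A x -> B (f x)) /\ (forall y, B y -> A (g y)) /\
    (forall x, A x -> g (f x) = x) /\ (forall y, B y -> f (g y) = y) /\
    {within A, continuous f} /\ {within B, continuous g}.

Definition strongly_homogeneous (T : topologicalType) : Prop :=
  hausdorff_space T /\
  forall A B : set T, clopen A -> clopen B -> A !=set0 -> B !=set0 ->
    homeomorphic_subspaces A B.

Definition discrete_subset (T : topologicalType) (D : set T) : Prop :=
  forall x : T, exists U : set T, nbhs x U /\
    (forall a b, U a -> U b -> D a -> D b -> a = b).

Definition self_homeomorphism (T : topologicalType) (h : T -> T) : Prop :=
  exists g : T -> T, cancel h g /\ cancel g h /\ continuous h /\ continuous g.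

(* A bijection
   f : A -> B is represented by a function f : T -> T mapping A bijectively
   onto B. *)
Definition sDH (T : topologicalType) : Prop :=
  hausdorff_space T /\
  forall (A B : set T) (f : T -> T),
    discrete_subset A -> discrete_subset B ->
    (forall a, A a -> B (f a)) ->
    (forall a a', A a -> A a' -> f a = f a' -> a = a') ->
    (forall b, B b -> exists2 a, A a & f a = b) ->
    exists h : T -> T, self_homeomorphism h /\ (forall a, A a -> h a = f a).

From mathcomp Require Import all_boot all_order all_algebra.
From mathcomp Require Import all_classical all_reals all_analysis.
From mathcomp Require Import Rstruct Rstruct_topology lra.
Import Order.TTheory GRing.Theory Num.Theory.
Local Open Scope classical_set_scope.
Local Open Scope ring_scope.
Set Implicit Arguments. Unset Strict Implicit. Unset Printing Implicit Defensive.

(* Let A, B be discrete (hence closed) subsets of X and f : A -> B a bijection.  If X has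
   an isolated point, strong homogeneity makes X a single point.  Otherwise A misses some
   point z, and A is countable since X is separable metric; so each a in A gets a clopen
   neighbourhood W_a within distance 1/(n_a + 1) of a, for an injective index n_a, and these
   can be chosen pairwise disjoint and avoiding z, with a clopen union by local finiteness.
   Refining each W_a to a strictly decreasing clopen base W_a = W_a^0 ⊋ W_a^1 ⊋ ... at a
   partitions X into the points of A, the nonempty clopen annuli W_a^k \ W_a^(k+1), and the
   nonempty clopen complement of the union of the W_a.  After doing the same for B, strong
   homogeneity provides homeomorphisms from the annulus (a, k) onto the annulus (f a, k) and
   between the two complements; together with f on A they glue to a homeomorphism of X,
   continuous at a in A because the annuli of level >= k around a go into W_(f a)^k. *)

Local Notation R := Rdefinitions.R.

Lemma exists_inv_nat_lt (F : archiRealFieldType) (e : F) :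
  0 < e -> exists k : nat, (k.+1%:R)^-1 < e.
Proof.
move=> e0; exists (Num.trunc e^-1).
by rewrite invf_plt ?posrE ?ltr0n ?invr_gt0 // truncnS_gt.
Qed.

Record clopen_chain (T : topologicalType) (a : T) (W : nat -> set T) : Prop := {
  chain_clopen : forall k, clopen (W k);
  chain_mem : forall k, W k a;
  chain_decr : forall k, W k.+1 `<=` W k;
  chain_strict : forall k, W k `\` W k.+1 !=set0;
  chain_cap : forall x, (forall k, W k x) -> x = a;
  chain_base : forall N, nbhs a N -> exists k, W k `<=` N }.

Definition annulus (T : Type) (W : nat -> set T) k := W k `\` W k.+1.

Section Chain.
Variables (T : topologicalType) (a : T) (W : nat -> set T).
Hypothesis HW : clopen_chain a W.

Lemma chain_mono j k : (j <= k)%N -> W k `<=` W j.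
Proof.
elim: k => [|k IH]; first by rewrite leqn0 => /eqP ->.
rewrite leq_eqVlt ltnS => /orP[/eqP -> //|/IH sub y /(chain_decr HW)]; exact: sub.
Qed.

Lemma annulus_sub0 k : annulus W k `<=` W 0%N.
Proof. by move=> x [Wx _]; exact: chain_mono (leq0n k) _ Wx. Qed.

Lemma annulus_level j k x : annulus W j x -> W k x -> (k <= j)%N.
Proof.
move=> [_ nWx] Wkx; rewrite leqNgt; apply/negP => jk.
exact: nWx (chain_mono jk Wkx).
Qed.

Lemma annulus_uniq j k x : annulus W j x -> annulus W k x -> j = k.
Proof.
move=> ajx akx; apply/eqP.
by rewrite eqn_leq (annulus_level akx ajx.1) (annulus_level ajx akx.1).
Qed.

Lemma chain_annulus x : W 0%N x -> x <> a -> exists k, annulus W k x.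
Proof.
move=> W0x xa; have [[k Wkx]|allW] := pselect (exists k, ~ W k x); last first.
  by exfalso; apply/xa/(chain_cap HW) => k; apply: contrapT => ?; apply: allW; exists k.
elim: k Wkx => [//|k IH] Wkx.
by have [Wx|] := pselect (W k x); [exists k | exact: IH].
Qed.

Lemma annulus_clopen k : clopen (annulus W k).
Proof.
apply: clopenI; first exact: (chain_clopen HW).
by apply: (clopenC set0); exact: (chain_clopen HW).
Qed.

End Chain.

(* The point [z] keeps the complement of the union nonempty. *)
Record clopen_chains (T : topologicalType) (D : set T) (z : T)
    (W : T -> nat -> set T) : Prop := {
  chains_chain : forall a, D a -> clopen_chain a (W a);
  chains_disj : forall a a' x, D a -> D a' -> W a 0%N x -> W a' 0%N x -> a = a';
  chains_clopen : clopen (\bigcup_(a in D) W a 0%N);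
  chains_avoid : ~ (\bigcup_(a in D) W a 0%N) z }.

Section Chains.
Variables (T : topologicalType) (D : set T) (z : T) (W : T -> nat -> set T).
Hypothesis HW : clopen_chains D z W.

Lemma chains_annulus_notin a k x : D a -> annulus (W a) k x -> ~ D x.
Proof.
move=> Da [Wx nWx] Dx.
have ax : a = x := chains_disj HW Da Dx
  (chain_mono (chains_chain HW Da) (leq0n k) Wx) (chain_mem (chains_chain HW Dx) 0).
by apply: nWx; rewrite -ax; exact: chain_mem (chains_chain HW Da) _.
Qed.

Lemma chains_annulus_uniq a a' k k' x : D a -> D a' ->
  annulus (W a) k x -> annulus (W a') k' x -> a = a' /\ k = k'.
Proof.
move=> Da Da' akx akx'.
have aa' := chains_disj HW Da Da' (annulus_sub0 (chains_chain HW Da) akx)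
  (annulus_sub0 (chains_chain HW Da') akx').
by subst a'; split=> //; exact: (annulus_uniq (chains_chain HW Da) akx akx').
Qed.

Lemma chains_cover x : (\bigcup_(a in D) W a 0%N) x -> ~ D x ->
  exists a k, D a /\ annulus (W a) k x.
Proof.
move=> [a Da W0x] Dx.
have [|k akx] := chain_annulus (chains_chain HW Da) W0x; last by exists a, k.
by move=> xa; apply: Dx; rewrite xa.
Qed.

End Chains.

Record subspace_homeo (T : topologicalType) (A B : set T) (f g : T -> T) : Prop := {
  homeo_fun : forall x, A x -> B (f x);
  homeo_inv_fun : forall y, B y -> A (g y);
  homeo_K : forall x, A x -> g (f x) = x;
  homeo_inv_K : forall y, B y -> f (g y) = y;
  homeo_cont : {within A, continuous f};
  homeo_inv_cont : {within B, continuous g} }.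

Lemma subspace_homeo_sym (T : topologicalType) (A B : set T) f g :
  subspace_homeo A B f g -> subspace_homeo B A g f.
Proof. by case=> *; split. Qed.

Lemma homeomorphic_subspaces_homeo (T : topologicalType) (A B : set T) :
  homeomorphic_subspaces A B -> exists f g, subspace_homeo A B f g.
Proof. by move=> [f [g [? [? [? [? [? ?]]]]]]]; exists f, g. Qed.

Lemma self_homeomorphism_id (T : topologicalType) : self_homeomorphism (@id T).
Proof. by exists id; do 3 split => //; move=> x; exact: cvg_id. Qed.

Lemma continuous_at_open_eq (S U : topologicalType) (P : set S) (g p : S -> U) x :
  open P -> P x -> (forall y, P y -> g y = p y) -> {within P, continuous p} ->
  {for x, continuous g}.
Proof.
move=> oP Px gp; rewrite continuous_open_subspace // => /(_ x (mem_set Px)) px.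
rewrite /prop_for /continuous_at gp // => N /px pN.
have : nbhs x (p @^-1` N `&` P) by apply: filterI => //; exact: open_nbhs_nbhs.
by apply: filterS => y [pNy Py] /=; rewrite gp.
Qed.

Lemma strongly_homogeneous_open_point (T : topologicalType) (p : T) :
  strongly_homogeneous T -> open [set p] -> forall x, x = p.
Proof.
move=> [hausT homT] op.
have cp : clopen [set p] by split=> //; exact/accessible_closed_set1/hausdorff_accessible.
have [f [g [fT _ gfT _ _ _]]] := homeomorphic_subspaces_homeo
  (homT _ _ clopenT cp (ex_intro _ p I) (ex_intro _ p erefl)).
by move=> x; have := gfT p I; rewrite -(gfT x I) (fT x I) (fT p I).
Qed.

Definition glue (T : topologicalType) (A : set T) (W : T -> nat -> set T) (f : T -> T)
    (phi : T -> nat -> T -> T) (phiR : T -> T) (x : T) : T :=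
  if pselect (A x) then f x
  else if pselect ((\bigcup_(a in A) W a 0%N) x) then
    let i := xget (x, 0%N) [set i | A i.1 /\ annulus (W i.1) i.2 x] in phi i.1 i.2 x
  else phiR x.

Section GlueValues.
Variables (T : topologicalType) (A : set T) (z : T) (W : T -> nat -> set T).
Variables (f phiR : T -> T) (phi : T -> nat -> T -> T).
Hypothesis HW : clopen_chains A z W.
Local Notation h := (glue A W f phi phiR).

Lemma glue_in x : A x -> h x = f x.
Proof. by rewrite /glue; case: pselect. Qed.

Lemma glue_annulus a k x : A a -> annulus (W a) k x -> h x = phi a k x.
Proof.
move=> Aa akx; rewrite /glue; case: pselect => [Ax|nAx].
  by case: (chains_annulus_notin HW Aa akx Ax).
case: pselect => [Ux|]; last first.
  by case; exists a => //; exact: (annulus_sub0 (chains_chain HW Aa) akx).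
have ex : exists i : T * nat, [set i | A i.1 /\ annulus (W i.1) i.2 x] i by exists (a, k).
case: (xgetPex (x, 0%N) ex); case: xget => a' k' /= Aa' a'k'x.
by case: (chains_annulus_uniq HW Aa' Aa a'k'x akx) => -> ->.
Qed.

Lemma glue_out x : ~ (\bigcup_(a in A) W a 0%N) x -> h x = phiR x.
Proof.
move=> Ux; rewrite /glue; case: pselect => [Ax|nAx]; last by case: pselect.
by exfalso; apply: Ux; exists x => //; exact: chain_mem (chains_chain HW Ax) 0.
Qed.

End GlueValues.

Arguments glue_in {T A W f phiR phi x}.
Arguments glue_annulus {T A z W f phiR phi} HW {a k x}.
Arguments glue_out {T A z W f phiR phi} HW {x}.

Section Glue.
Variables (T : topologicalType) (A B : set T) (zA zB : T) (WA WB : T -> nat -> set T).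
Variables (f g phiR psiR : T -> T) (phi psi : T -> nat -> T -> T).
Hypotheses (HA : clopen_chains A zA WA) (HB : clopen_chains B zB WB).
Hypothesis fAB : forall a, A a -> B (f a).
Hypothesis homeo_annuli : forall a k, A a ->
  subspace_homeo (annulus (WA a) k) (annulus (WB (f a)) k) (phi a k) (psi (f a) k).
Hypothesis homeo_rest : subspace_homeo (~` \bigcup_(a in A) WA a 0%N)
  (~` \bigcup_(b in B) WB b 0%N) phiR psiR.

Lemma glue_continuous : continuous (glue A WA f phi phiR).
Proof.
move=> x; have [Ax|Ax] := pselect (A x).
  have cA := chains_chain HA Ax; have cB := chains_chain HB (fAB Ax).
  move=> N; rewrite glue_in // => /(chain_base cB)[k WkN].
  have : nbhs x (WA x k).
    by apply: open_nbhs_nbhs; split; [exact: (chain_clopen cA k).1 | exact: chain_mem cA k].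
  apply: filterS => y Wy /=; apply: WkN.
  have [->|yx] := pselect (y = x); first by rewrite glue_in //; exact: chain_mem cB k.
  have [j ajy] := chain_annulus cA (chain_mono cA (leq0n k) Wy) yx.
  rewrite (glue_annulus HA Ax ajy).
  exact: (chain_mono cB (annulus_level cA ajy Wy) (homeo_fun (homeo_annuli j Ax) ajy).1).
have [Ux|Ux] := pselect ((\bigcup_(a in A) WA a 0%N) x).
  have [a [k [Aa akx]]] := chains_cover HA Ux Ax.
  apply: (continuous_at_open_eq _ akx _ (homeo_cont (homeo_annuli k Aa))).
    exact: (annulus_clopen (chains_chain HA Aa) k).1.
  by move=> y; exact: (glue_annulus HA Aa).
apply: (continuous_at_open_eq _ Ux _ (homeo_cont homeo_rest)).
  by rewrite openC; exact: (chains_clopen HA).2.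
by move=> y; exact: (glue_out HA).
Qed.

Hypothesis gf : forall a, A a -> g (f a) = a.

Lemma glueK : cancel (glue A WA f phi phiR) (glue B WB g psi psiR).
Proof.
move=> x; have [Ax|Ax] := pselect (A x).
  by rewrite glue_in // glue_in ?gf //; exact: fAB.
have [Ux|Ux] := pselect ((\bigcup_(a in A) WA a 0%N) x).
  have [a [k [Aa akx]]] := chains_cover HA Ux Ax; have hk := homeo_annuli k Aa.
  rewrite (glue_annulus HA Aa akx) (glue_annulus HB (fAB Aa) (homeo_fun hk akx)).
  exact: (homeo_K hk akx).
rewrite (glue_out HA Ux) (glue_out HB (homeo_fun homeo_rest Ux)).
exact: (homeo_K homeo_rest Ux).
Qed.

End Glue.

Section MetricSpace.
Variables (T : topologicalType) (d : T -> T -> R).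
Hypothesis d_eq0 : forall x y : T, d x y = 0 <-> x = y.
Hypothesis d_sym : forall x y : T, d x y = d y x.
Hypothesis d_triangle : forall x y z : T, d x z <= d x y + d y z.
Hypothesis open_d : forall U : set T, open U <->
  (forall x, U x -> exists e : R, 0 < e /\ (forall y, d x y < e -> U y)).

Lemma d_self x : d x x = 0. Proof. exact/d_eq0. Qed.

Lemma d_ge0 x y : 0 <= d x y.
Proof. by have := d_triangle x y x; rewrite (d_sym y x) d_self; lra. Qed.

Lemma d_small_eq x y : (forall e : R, 0 < e -> d x y < e) -> x = y.
Proof.
move=> small; apply/d_eq0/eqP; rewrite eq_le d_ge0 andbT leNgt.
by apply/negP => /small; rewrite ltxx.
Qed.

Lemma open_dball x r : open [set y | d x y < r].
Proof.
apply/open_d => y /= xy; exists (r - d x y); split=> [|w yw]; first lra.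
by have := d_triangle x y w; lra.
Qed.

Lemma nbhs_dball x N : nbhs x N -> exists2 e : R, 0 < e & forall y, d x y < e -> N y.
Proof.
rewrite nbhsE => -[U [oU Ux] UN].
have [e [e0 xU]] := proj1 (open_d U) oU x Ux.
by exists e => // y /xU /UN.
Qed.

Lemma open_setC1 (z : T) : open [set y | y <> z].
Proof.
apply/open_d => y /= yz; exists (d y z); split=> [|w yw wz]; last first.
  by move: yw; rewrite wz ltxx.
by rewrite lt_neqAle d_ge0 andbT eq_sym; apply/eqP => /d_eq0.
Qed.

Implicit Types (D : set T).

Definition isolating_radius (D : set T) (e : T -> R) :=
  forall a, D a -> 0 < e a /\ forall a', D a' -> d a a' < e a -> a' = a.

Lemma discrete_subset_radius D : discrete_subset D -> exists e, isolating_radius D e.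
Proof.
move=> dD; have /choice[e eD] : forall a, exists r : R, D a ->
    0 < r /\ forall a', D a' -> d a a' < r -> a' = a.
  move=> a; have [U [aU Uuniq]] := dD a; have [r r0 rU] := nbhs_dball aU.
  exists r => Da; split=> // a' Da' aa'.
  by apply: Uuniq => //; apply: rU; rewrite ?d_self.
by exists e.
Qed.

Lemma isolating_half_balls_disjoint D e a a' y : isolating_radius D e ->
  D a -> D a' -> d a y < e a / 2 -> d a' y < e a' / 2 -> a = a'.
Proof.
move=> eD Da Da' ay a'y; have := d_triangle a y a'; rewrite (d_sym y a') => aa'.
have [ea Ia] := eD a Da; have [ea' Ia'] := eD a' Da'.
have [le|lt] := leP (e a') (e a); first by apply/esym/Ia => //; lra.
by apply: Ia' => //; rewrite d_sym; lra.
Qed.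

Hypothesis sepT : separable_space T.

Lemma discrete_subset_countable D : discrete_subset D -> countable D.
Proof.
move=> /discrete_subset_radius[e eD]; have [S [cS dS]] := sepT.
have /countable_injP[iS iS_inj] := cS.
have /choice[c hc] : forall a, exists s, D a -> S s /\ d a s < e a / 2.
  move=> a; have [Da|] := pselect (D a); last by exists a.
  have [ea _] := eD a Da.
  have [s [ds Ss]] : ([set y | d a y < e a / 2] `&` S) !=set0.
    by apply: dS; [exists a; rewrite /= d_self; lra | exact: open_dball].
  by exists s.
apply/countable_injP; exists (iS \o c) => a a' /[!inE] Da Da' /= eq_i.
have [Sa ca] := hc a Da; have [Sa' ca'] := hc a' Da'.
have eq_c : c a = c a' by apply: iS_inj; rewrite ?inE.
by apply: (isolating_half_balls_disjoint eD Da Da' ca); rewrite eq_c.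
Qed.

(* A point x off the union has a ball of radius r meeting D at most once.  The sets of
   index above N, where 1/(N+1) < r/2, stay within r/2 of their centre, so only those of
   index <= N and the one around the point of D near x can come close to x. *)
Lemma closed_bigcup_shrinking D (G : T -> set T) (idx : T -> nat) :
  discrete_subset D -> {in D &, injective idx} ->
  (forall a, D a -> closed (G a)) ->
  (forall a y, D a -> G a y -> d a y < (idx a).+1%:R^-1) ->
  closed (\bigcup_(a in D) G a).
Proof.
move=> dD idx_inj Gcl Gsmall; rewrite -openC; apply/open_d => x notGx.
have [U [xU Uuniq]] := dD x; have [r r0 rU] := nbhs_dball xU.
have [N Nr] : exists N : nat, N.+1%:R^-1 < r / 2 by apply: exists_inv_nat_lt; lra.
have [M Mnear] : exists M, forall a, D a -> d x a < r -> (idx a <= M)%N.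
  have [[a0 [Da0 xa0]]|none] := pselect (exists a, D a /\ d x a < r).
    by exists (idx a0) => a Da xa; rewrite (Uuniq a a0 (rU a xa) (rU a0 xa0) Da Da0).
  by exists 0%N => a Da xa; exfalso; apply: none; exists a.
pose F := D `&` [set a | (idx a <= maxn N M)%N].
have finF : finite_set F.
  have F_inj : {in F &, injective idx}.
    by apply: sub_in2 idx_inj => a; rewrite !inE => -[].
  rewrite -(eq_finite_set (inj_card_eq F_inj)).
  by apply: sub_finite_set (finite_II (maxn N M).+1) => _ [a [_ aNM] <-].
have oF : open (~` \bigcup_(a in F) G a).
  by rewrite openC; apply: closed_bigcup => // a [Da _]; exact: Gcl.
have notFx : ~ (\bigcup_(a in F) G a) x.
  by move=> [a [Da _] Gax]; apply: notGx; exists a.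
have [s [s0 sF]] := proj1 (open_d _) oF x notFx.
exists (Num.min s (r / 2)); split=> [|y].
  by rewrite lt_min s0 /=; lra.
rewrite lt_min => /andP[ys yr] [a Da Gay].
have [aNM|NMa] := leqP (idx a) (maxn N M); first by apply: (sF y ys); exists a.
have inv_le : ((idx a).+1%:R : R)^-1 <= N.+1%:R^-1.
  by rewrite lef_pV2 ?posrE ?ltr0n // ler_nat ltnS (leq_trans (leq_maxl N M) (ltnW NMa)).
have ay : d a y < r / 2 := lt_trans (lt_le_trans (Gsmall a y Da Gay) inv_le) Nr.
have xa : d x a < r by have := d_triangle x y a; rewrite (d_sym y a); lra.
by have := Mnear a Da xa; rewrite leqNgt (leq_ltn_trans (leq_maxr N M) NMa).
Qed.

Hypothesis zdT : zero_dim_space T.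

Lemma clopen_sub_dball (U : set T) a x r : open U -> U a -> a <> x -> 0 < r ->
  exists V, [/\ clopen V, V a, V `<=` U, (forall y, V y -> d a y < r) & ~ V x].
Proof.
move=> oU Ua ax r0.
have aU : (U `&` [set y | d a y < r] `&` [set y | y <> x]) a.
  by split; first split; rewrite //= d_self.
have [V [cV [Va VU]]] := zdT (openI (openI oU (open_dball a r)) (open_setC1 x)) aU.
exists V; split=> // [y /VU[[]] //|y /VU[[]] //|/VU[_]]; exact.
Qed.

Lemma discrete_clopen_separation D z : discrete_subset D -> ~ D z ->
  exists G : T -> set T, [/\ forall a, D a -> clopen (G a) /\ G a a,
    forall a a' x, D a -> D a' -> G a x -> G a' x -> a = a',
    clopen (\bigcup_(a in D) G a) & ~ (\bigcup_(a in D) G a) z].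
Proof.
move=> dD Dz; have [e eD] := discrete_subset_radius dD.
have /countable_injP[idx idx_inj] := discrete_subset_countable dD.
pose rho a := Num.min (e a / 2) ((idx a).+1%:R^-1).
have rho_le a : rho a <= e a / 2 /\ rho a <= (idx a).+1%:R^-1.
  by rewrite !ge_min !lexx orbT.
have /choice[G hG] : forall a, exists V, D a ->
    [/\ clopen V, V a, (forall y, V y -> d a y < rho a) & ~ V z].
  move=> a; have [Da|nDa] := pselect (D a); last by exists set0 => /nDa.
  have rho0 : 0 < rho a by rewrite lt_min invr_gt0 ltr0n andbT; have [] := eD a Da; lra.
  have az : a <> z by move=> az; apply: Dz; rewrite -az.
  by have [V [? ? _ ? ?]] := clopen_sub_dball openT I az rho0; exists V.
exists G; split.
- by move=> a /hG[].
- move=> a a' x Da Da' Gax Ga'x.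
  have [_ _ small _] := hG a Da; have [_ _ small' _] := hG a' Da'.
  apply: (isolating_half_balls_disjoint eD Da Da' (y := x)).
    exact: lt_le_trans (small x Gax) (rho_le a).1.
  exact: lt_le_trans (small' x Ga'x) (rho_le a').1.
- split; first by apply: bigcup_open => a /hG[[]].
  apply: (closed_bigcup_shrinking dD idx_inj); first by move=> a /hG[[]].
  move=> a y Da Gay; have [_ _ small _] := hG a Da.
  exact: lt_le_trans (small y Gay) (rho_le a).2.
- by move=> [a Da Gaz]; have [_ _ _ []] := hG a Da.
Qed.

Hypothesis no_isolated : forall p : T, ~ open [set p].

Lemma open_exists_other (U : set T) a : open U -> U a -> exists2 x, U x & x <> a.
Proof.
move=> oU Ua; apply: contrapT => none; apply: (@no_isolated a).
suff -> : [set a] = U by [].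
apply/seteqP; split=> [_ -> //|y Uy]; apply: contrapT => ya.
by apply: none; exists y.
Qed.

Lemma discrete_subset_proper D (t : T) : discrete_subset D -> exists z, ~ D z.
Proof.
move=> dD; have [U [+ Uuniq]] := dD t; rewrite nbhsE => -[V [oV Vt] VU].
have [x Vx xt] := open_exists_other oV Vt.
have [Dx|] := pselect (D x); last by exists x.
have [Dt|] := pselect (D t); last by exists t.
by exfalso; apply/xt/Uuniq => //; exact: VU.
Qed.

Lemma clopen_chain_from (G : set T) a : clopen G -> G a ->
  exists W, W 0%N = G /\ clopen_chain a W.
Proof.
move=> cG Ga.
have /choice[S hS] : forall kU : nat * set T, exists V, clopen kU.2 -> kU.2 a ->
    [/\ clopen V, V a, V `<=` kU.2, (forall y, V y -> d a y < kU.1.+1%:R^-1)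
      & kU.2 `\` V !=set0].
  move=> [k U] /=; have [[cU Ua]|nU] := pselect (clopen U /\ U a); last first.
    by exists set0 => cU Ua; case: nU.
  have [x Ux xa] := open_exists_other cU.1 Ua.
  have k0 : 0 < (k.+1%:R : R)^-1 by rewrite invr_gt0 ltr0n.
  have [V [cV Va VU Vsmall Vx]] := clopen_sub_dball cU.1 Ua (nesym xa) k0.
  by exists V => _ _; split=> //; exists x.
pose W := fix W k := if k is k'.+1 then S (k', W k') else G.
have W_clopen_mem k : clopen (W k) /\ W k a.
  by elim: k => [|k [cW Wa]] //; have [] := hS (k, W k) cW Wa.
have hW k := hS (k, W k) (W_clopen_mem k).1 (W_clopen_mem k).2.
exists W; split=> //; split.
- by move=> k; have [] := W_clopen_mem k.
- by move=> k; have [] := W_clopen_mem k.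
- by move=> k; have [] := hW k.
- by move=> k; have [] := hW k.
- move=> x Wx; apply/esym/d_small_eq => r r0; have [k kr] := exists_inv_nat_lt r0.
  by have [_ _ _ small _] := hW k; exact: lt_trans (small x (Wx k.+1)) kr.
- move=> N /nbhs_dball[r r0 rN]; have [k kr] := exists_inv_nat_lt r0.
  exists k.+1 => y Wy; apply: rN.
  by have [_ _ _ small _] := hW k; exact: lt_trans (small y Wy) kr.
Qed.

Lemma discrete_clopen_chains D z : discrete_subset D -> ~ D z ->
  exists W, clopen_chains D z W.
Proof.
move=> dD Dz.
have [G [GD Gdisj cG Gz]] := discrete_clopen_separation dD Dz.
have /choice[W hW] : forall a, exists W, D a -> W 0%N = G a /\ clopen_chain a W.
  move=> a; have [Da|nDa] := pselect (D a); last by exists (fun=> set0) => /nDa.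
  by have [cGa Gaa] := GD a Da; have [W ?] := clopen_chain_from cGa Gaa; exists W.
have W0 a : D a -> W a 0%N = G a by move=> /hW[].
have UW : \bigcup_(a in D) W a 0%N = \bigcup_(a in D) G a by exact: eq_bigcupr.
exists W; split; rewrite ?UW //.
- by move=> a /hW[].
- by move=> a a' x Da Da'; rewrite !W0 //; exact: Gdisj.
Qed.

Hypothesis homT : forall A B : set T, clopen A -> clopen B -> A !=set0 -> B !=set0 ->
  homeomorphic_subspaces A B.

Lemma chains_annuli_homeo A B zA zB WA WB (f : T -> T) :
  clopen_chains A zA WA -> clopen_chains B zB WB -> (forall a, A a -> B (f a)) ->
  exists phi psi : T -> nat -> T -> T, forall a k, A a ->
    subspace_homeo (annulus (WA a) k) (annulus (WB (f a)) k) (phi a k) (psi a k).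
Proof.
move=> HA HB fAB.
have /choice[Phi hPhi] : forall ak : T * nat, exists p : (T -> T) * (T -> T), A ak.1 ->
    subspace_homeo (annulus (WA ak.1) ak.2) (annulus (WB (f ak.1)) ak.2) p.1 p.2.
  move=> [a k] /=; have [Aa|nAa] := pselect (A a); last by exists (id, id) => /nAa.
  have cA := chains_chain HA Aa; have cB := chains_chain HB (fAB a Aa).
  have [phi [psi ?]] := homeomorphic_subspaces_homeo (homT (annulus_clopen cA k)
    (annulus_clopen cB k) (chain_strict cA k) (chain_strict cB k)).
  by exists (phi, psi).
by exists (fun a k => (Phi (a, k)).1), (fun a k => (Phi (a, k)).2) => a k /(hPhi (a, k)).
Qed.

Lemma extend_discrete_bijection A B (f : T -> T) :
  discrete_subset A -> discrete_subset B -> (forall a, A a -> B (f a)) ->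
  (forall a a', A a -> A a' -> f a = f a' -> a = a') ->
  (forall b, B b -> exists2 a, A a & f a = b) ->
  exists h, self_homeomorphism h /\ (forall a, A a -> h a = f a).
Proof.
move=> dA dB fAB finj fsurj.
have [[t _]|T0] := pselect (exists t : T, True); last first.
  by exists id; split=> [|a]; [exact: self_homeomorphism_id | case: T0; exists a].
have [zA nzA] := discrete_subset_proper t dA.
have [zB nzB] := discrete_subset_proper t dB.
have [WA HA] := discrete_clopen_chains dA nzA.
have [WB HB] := discrete_clopen_chains dB nzB.
have /choice[g hg] : forall b, exists a, B b -> A a /\ f a = b.
  move=> b; have [Bb|nBb] := pselect (B b); last by exists b => /nBb.
  by have [a Aa fa] := fsurj b Bb; exists a.
have gB b : B b -> A (g b) by move=> /hg[].
have fg b : B b -> f (g b) = b by move=> /hg[].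
have gf a : A a -> g (f a) = a.
  by move=> Aa; apply: finj => //; [exact/gB/fAB | exact/fg/fAB].
have [phi [psi hP]] := chains_annuli_homeo HA HB fAB.
have [phiR [psiR hR]] := homeomorphic_subspaces_homeo
  (homT (clopenC set0 (chains_clopen HA)) (clopenC set0 (chains_clopen HB))
    (ex_intro _ zA (chains_avoid HA)) (ex_intro _ zB (chains_avoid HB))).
pose psi' b k := psi (g b) k.
have hAB a k : A a -> subspace_homeo (annulus (WA a) k) (annulus (WB (f a)) k)
    (phi a k) (psi' (f a) k) by move=> Aa; rewrite /psi' gf //; exact: hP.
have hBA b k : B b -> subspace_homeo (annulus (WB b) k) (annulus (WA (g b)) k)
    (psi' b k) (phi (g b) k).
  by move=> Bb; apply: subspace_homeo_sym; have := hP (g b) k (gB b Bb); rewrite fg.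
exists (glue A WA f phi phiR); split=> [|a Aa]; last exact: glue_in.
exists (glue B WB g psi' psiR); split; last split; last split.
- exact: (glueK HA HB fAB hAB hR gf).
- exact: (glueK HB HA gB hBA (subspace_homeo_sym hR) fg).
- exact: (glue_continuous HA HB fAB hAB hR).
- exact: (glue_continuous HB HA gB hBA (subspace_homeo_sym hR)).
Qed.

End MetricSpace.

Theorem mainTheorem3 (T : topologicalType) :
  strongly_homogeneous T -> separable_space T -> metrizable_space T ->
  zero_dim_space T -> sDH T.
Proof.
move=> [hausT homT] sepT [d [d_eq0 [d_sym [d_triangle open_d]]]] zdT.
split=> // A B f dA dB fAB finj fsurj.
have [[p op]|isolated] := pselect (exists p : T, open [set p]).
  have allp := strongly_homogeneous_open_point (conj hausT homT) op.
  by exists id; split=> [|a _]; [exact: self_homeomorphism_id | rewrite (allp (f a)) (allp a)].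
have no_isolated (q : T) : ~ open [set q] by move=> oq; apply: isolated; exists q.
exact: (extend_discrete_bijection d_eq0 d_sym d_triangle open_d sepT zdT no_isolated
  homT dA dB fAB finj fsurj).
Qed.
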